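(* Let $\Delta^3_6$ be the pure $3$-dimensional simplicial complex on the $12$ vertices $\{\pm1,\pm2,\dots,\pm6\}$ whose $48$ facets are the following $24$ four-element sets together with their antipodal images (the image of a set $F$ under $x\mapsto -x$): $\{1,2,5,6\}$, $\{-1,-2,5,6\}$, $\{2,3,5,6\}$, $\{-2,-3,5,6\}$, $\{3,4,5,6\}$, $\{-3,-4,5,6\}$, $\{1,-4,5,6\}$, $\{1,-4,-5,6\}$, $\{1,-4,-5,-6\}$, $\{1,2,3,5\}$, $\{-1,-2,3,5\}$, $\{1,-2,3,5\}$, $\{1,2,4,6\}$, $\{-1,-2,4,6\}$, $\{2,3,4,6\}$, $\{-2,-3,4,6\}$, $\{1,-3,4,6\}$, $\{2,3,4,-5\}$, $\{-1,2,4,-5\}$, $\{3,4,5,-6\}$, $\{-1,3,5,-6\}$, $\{1,2,-3,4\}$, $\{1,2,3,-4\}$, $\{1,-2,3,-4\}$. Then $\Delta^3_6$ (which is a simplicial $3$-sphere) is not polytopal: there is no simplicial convex $4$-polytope whose boundary complex is combinatorially isomorphic to $\Delta^3_6$.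
   Context: This $\Delta^3_6$ is a member of Jockusch's family of centrally symmetric simplicial $3$-spheres. A simplicial $(d-1)$-sphere is called polytopal if it is isomorphic to the boundary complex of a simplicial convex $d$-polytope; here $d=4$. *)

From HB Require Import structures.
From mathcomp Require Import all_boot all_order all_algebra.
From mathcomp Require Import reals.
Set Implicit Arguments. Unset Strict Implicit. Unset Printing Implicit Defensive.
Import Order.TTheory GRing.Theory Num.Theory.
Local Open Scope ring_scope.

(* Vertex +/-i (1 <= i <= 6) is encoded as (i-1, sign) : 'I_6 * bool,
   with sign = true meaning negative. *)
Definition V : finType := ('I_6 * bool)%type.

Definition vtx (z : int) : V := (inord (`|z|%N).-1, z < 0).

Definition base_facets : seq (seq int) :=
  [:: [:: 1; 2; 5; 6]; [:: -1; -2; 5; 6]; [:: 2; 3; 5; 6]; [:: -2; -3; 5; 6];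
      [:: 3; 4; 5; 6]; [:: -3; -4; 5; 6]; [:: 1; -4; 5; 6]; [:: 1; -4; -5; 6];
      [:: 1; -4; -5; -6]; [:: 1; 2; 3; 5]; [:: -1; -2; 3; 5]; [:: 1; -2; 3; 5];
      [:: 1; 2; 4; 6]; [:: -1; -2; 4; 6]; [:: 2; 3; 4; 6]; [:: -2; -3; 4; 6];
      [:: 1; -3; 4; 6]; [:: 2; 3; 4; -5]; [:: -1; 2; 4; -5]; [:: 3; 4; 5; -6];
      [:: -1; 3; 5; -6]; [:: 1; 2; -3; 4]; [:: 1; 2; 3; -4]; [:: 1; -2; 3; -4]].

Definition facets_Delta : seq {set V} :=
  [seq [set:: map vtx F] | F <- base_facets ++ map (map (fun z => - z)) base_facets].

Definition in_Delta (S : {set V}) : bool := has (fun F : {set V} => S \subset F) facets_Delta.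

Definition dot4 (R : ringType) (a x : 'rV[R]_4) : R := \sum_(i < 4) a 0 i * x 0 i.

(* S is the vertex set of a face of conv(p(V)): some supporting affine
   functional is <= b on all points, with equality exactly on S.
   (All faces of a polytope are exposed.) *)
Definition is_face (R : realType) (p : V -> 'rV[R]_4) (S : {set V}) : Prop :=
  exists (a : 'rV[R]_4) (b : R),
    forall v, dot4 a (p v) <= b /\ (dot4 a (p v) == b) = (v \in S).

Definition full_dim (R : realType) (p : V -> 'rV[R]_4) : Prop :=
  forall (a : 'rV[R]_4) (b : R), (forall v, dot4 a (p v) = b) -> a = 0.

(* p realizes Delta as the boundary complex of the convex 4-polytope
   conv(p(V)): p is injective, each p v is a vertex, the polytope is
   full-dimensional, and the proper faces of the polytope correspond
   (via their vertex sets) exactly to the faces of Delta.  Since the facets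
   of Delta have 4 vertices, such a polytope is automatically simplicial. *)
Definition polytopal_realization (R : realType) (p : V -> 'rV[R]_4) : Prop :=
  [/\ injective p, full_dim p, (forall v, is_face p [set v])
    & forall S : {set V}, S != setT -> (is_face p S <-> in_Delta S)].

Definition polytopal_Delta (R : realType) : Prop :=
  exists p : V -> 'rV[R]_4, polytopal_realization p.

Example facets_count : size facets_Delta = 48. Proof. by []. Qed.

From HB Require Import structures.
From mathcomp Require Import all_boot all_order all_algebra perm.
From mathcomp Require Import reals.
From mathcomp Require Import ring zify.
Set Implicit Arguments. Unset Strict Implicit. Unset Printing Implicit Defensive.
Import Order.TTheory GRing.Theory Num.Theory.
Local Open Scope ring_scope.

(* Suppose p realizes Delta^3_6 and let chi s be the determinant of the
   homogeneous coordinates (p x, 1) of the five vertices listed by s.  Then chi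
   is alternating, satisfies the three-term Grassmann-Pluecker relations, and
   for every facet F all other vertices lie on the same side of the hyperplane
   spanned by F: chi (F, v) chi (F, w) > 0.  Starting from the sign of one
   nonzero value chi (F, v), a fixed list of 98 such sign inferences reaches a
   determinant whose sign has already been derived with the opposite value.
   The list does not depend on p and -chi obeys the same rules, so
   chi (F, v) = 0, a contradiction. *)

Section RowDeterminants.
Variable R : comPzRingType.

Definition detr n (rs : seq 'rV[R]_n) : R := \det (\matrix_(i < n) nth 0 rs i).

Lemma det_xrow n (A : 'M[R]_n) i1 i2 : i1 != i2 -> \det (xrow i1 i2 A) = - \det A.
Proof. by move=> ne; rewrite xrowE det_mulmx det_perm odd_tperm ne expr1 mulN1r. Qed.

Lemma detr_swap n (s t : seq 'rV[R]_n) a b :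
  size (s ++ a :: b :: t) = n -> detr (s ++ b :: a :: t) = - detr (s ++ a :: b :: t).
Proof.
move=> sz; have : ((size s).+1 < size (s ++ a :: b :: t))%N.
  by rewrite size_cat /= !addnS ltnS leq_addr.
rewrite sz => lt2; have lt1 := ltnW lt2.
rewrite /detr -(det_xrow _ (i1 := Ordinal lt1) (i2 := Ordinal lt2)); last first.
  by rewrite -val_eqE /= (ltn_eqF (ltnSn _)).
congr (\det _); apply/matrixP => i j; rewrite !mxE.
case: tpermP => [->|->|/eqP ne1 /eqP ne2] /=; rewrite ?nth_cat ?ltnn ?subnn //.
  1,2: by rewrite ltnNge leqnSn subSnn.
case: ltnP => // le_si; case Ei: (i - size s)%N => [|[|k]] //.
all: by move: ne1 ne2; rewrite -!val_eqE /=; lia.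
Qed.

Lemma det_row'_dependency n (U : 'M[R]_(n.+1, n)) :
  \sum_(j < n.+1) ((-1) ^+ j * \det (row' j U)) *: row j U = 0.
Proof.
apply/rowP => k; rewrite summxE mxE.
(* B is U with its k-th column appended; it has two equal columns, and its
   expansion along the last one is the k-th entry of the sum. *)
pose B := \matrix_(i, j < n.+1) if unlift ord_max j is Some j' then U i j' else U i k.
have detB0 : \det B = 0.
  rewrite -det_tr (@determinant_alternate _ _ _ ord_max (lift ord_max k)) ?neq_lift //.
  by move=> j; rewrite !mxE unlift_none liftK.
have colB : col' ord_max B = U by apply/matrixP => i j; rewrite !mxE liftK.
under eq_bigr do rewrite !mxE.
rewrite -[LHS](signrMK n) -[RHS](mulr0 ((-1) ^+ n)); congr (_ * _).
rewrite -[RHS]detB0 (expand_det_col _ ord_max) mulr_sumr.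
by apply: eq_bigr => j _; rewrite /cofactor colB !mxE unlift_none /= exprD; ring.
Qed.

Lemma det_row'_rows n (s : seq 'rV[R]_n) (j : 'I_n.+1) : size s = n.+1 ->
  \det (row' j (\matrix_(i < n.+1) nth 0 s i)) = detr (take j s ++ drop j.+1 s).
Proof.
move=> sz; congr (\det _); apply/matrixP => i k; rewrite !mxE /= /bump nth_cat.
rewrite size_takel ?sz ?(ltnW (ltn_ord j)) //.
case: ltnP => [lt_ij | le_ji]; first by rewrite add0n nth_take.
by rewrite nth_drop addSn subnKC.
Qed.

Lemma detr_plucker n (X : seq 'rV[R]_n.+2) a b c d : size X = n ->
  detr (X ++ [:: a; b]) * detr (X ++ [:: c; d]) - detr (X ++ [:: a; c]) * detr (X ++ [:: b; d])
  + detr (X ++ [:: a; d]) * detr (X ++ [:: b; c]) = 0.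
Proof.
(* Apply the linear form L to the dependency between the rows of X, b, c, d;
   L kills the rows of X. *)
move=> szX; pose L y := detr (X ++ [:: a; y]).
have [g Lg] : exists g : 'I_n.+2 -> R, forall y, L y = \sum_k y 0 k * g k.
  pose M y := \matrix_(i < n.+2) nth 0 (X ++ [:: a; y]) i.
  exists (fun k => cofactor (M 0) ord_max k) => y.
  rewrite /L /detr -/(M y) (expand_det_row _ ord_max); apply: eq_bigr => k _.
  rewrite mxE nth_cat szX ltnNge leqnSn subSnn /=; congr (_ * _).
  rewrite /cofactor; congr (_ * \det _); apply/matrixP => i j; rewrite !mxE /= /bump.
  rewrite leqNgt ltn_ord add0n !nth_cat szX; case: ltnP => // le_ni.
  by have -> : (i - n = 0)%N by have := ltn_ord i; lia.
have L_X j : (j < n)%N -> L (nth 0 X j) = 0.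
  move=> lt_jn; apply: (determinant_alternate (i1 := inord j) (i2 := ord_max)).
    by rewrite -val_eqE /= inordK; lia.
  by move=> k; rewrite !mxE inordK ?nth_cat ?szX ?lt_jn ?ltnNge ?leqnSn ?subSnn //; lia.
pose U := \matrix_(i < n.+3) nth 0 (X ++ [:: b; c; d]) i.
have : \sum_(j < n.+3) (-1) ^+ j * \det (row' j U) * L (nth 0 (X ++ [:: b; c; d]) j) = 0.
  have /rowP dep := det_row'_dependency U.
  under eq_bigr do rewrite Lg mulr_sumr.
  rewrite exchange_big /=; apply: big1 => k _.
  have := dep k; rewrite summxE mxE => dep_k.
  transitivity ((\sum_(j < n.+3) (((-1) ^+ j * \det (row' j U)) *: row j U) 0 k) * g k).
    by rewrite big_distrl; apply: eq_bigr => j _; rewrite !mxE mulrA.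
  by rewrite dep_k mul0r.
rewrite !big_ord_recr /= big1 ?add0r => [|j _]; last first.
  by rewrite nth_cat szX ltn_ord L_X ?mulr0.
rewrite !det_row'_rows ?size_cat ?szX ?addn3 //.
rewrite !take_cat !drop_cat !nth_cat szX ltnn !ltnNge leqnSn !leqW ?leqnSn //= subnn.
have [-> -> ->] : [/\ (n.+1 - n = 1), (n.+2 - n = 2) & (n.+3 - n = 3)]%N by split; lia.
rewrite /= cats0 -!catA /= !exprS => sum0.
rewrite -[LHS](signrMK n) -[RHS](mulr0 ((-1) ^+ n)); congr (_ * _).
by rewrite -[RHS]sum0 /L; ring.
Qed.

End RowDeterminants.

Lemma detr_last_proportional (R : idomainType) n (X : seq 'rV[R]_n.+1) (g : 'cV[R]_n.+1) y z :
  size X = n -> (forall x, x \in X -> x *m g = 0) ->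
  (z *m g) 0 0 * detr (X ++ [:: y]) = (y *m g) 0 0 * detr (X ++ [:: z]).
Proof.
move=> szX Xg; have [-> | g_neq0] := eqVneq g 0; first by rewrite !mulmx0 !mxE !mul0r.
pose M u := \matrix_(i < n.+1) nth 0 (X ++ [:: u]) i.
have rowM u : row ord_max (M u) = u by rewrite rowK nth_cat szX ltnn subnn.
have row'M u u' : row' ord_max (M u) = row' ord_max (M u').
  apply/matrixP => i j; rewrite !mxE /= /bump leqNgt ltn_ord add0n.
  by rewrite !nth_cat szX ltn_ord.
pose u := (z *m g) 0 0 *: y - (y *m g) 0 0 *: z.
apply/eqP; rewrite -subr_eq0 -mulNr.
rewrite -(determinant_multilinear (i0 := ord_max) (A := M u)) ?rowM ?scaleNr //;
  try exact: row'M.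
rewrite -det_tr; apply/det0P; exists g^T; first by rewrite trmx_eq0.
apply/eqP; rewrite -trmx_mul trmx_eq0; apply/eqP/matrixP => i k; rewrite ord1.
have -> : (M u *m g) i 0 = (nth 0 (X ++ [:: u]) i *m g) 0 0.
  by rewrite !mxE; apply: eq_bigr => j _; rewrite !mxE.
rewrite nth_cat szX [RHS]mxE; case: ltnP => [lt_in | le_ni].
  by rewrite Xg ?mxE ?mem_nth ?szX.
have -> : (i - n = 0)%N by have := ltn_ord i; lia.
by rewrite mulmxBl -!scalemxAl !mxE [X in X - _]mulrC subrr.
Qed.

Lemma signed_mulr_gt0 (R : numDomainType) (c : bool) (y : R) : 0 < (-1) ^+ c * y ->
  forall (b : bool) (x : R), (0 < (-1) ^+ (b (+) c) * (x * y)) = (0 < (-1) ^+ b * x).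
Proof. by move=> y_gt0 b x; rewrite signr_addb mulrACA pmulr_lgt0. Qed.

Section SignCertificates.
Variables (T : eqType) (lt : rel T) (facet : pred (seq T)).

Definition alternating (R : zmodType) (chi : seq T -> R) :=
  forall s a b t, chi (s ++ b :: a :: t) = - chi (s ++ a :: b :: t).

Definition plucker_relations (R : pzRingType) (chi : seq T -> R) :=
  forall X a b c d,
    chi (X ++ [:: a; b]) * chi (X ++ [:: c; d]) - chi (X ++ [:: a; c]) * chi (X ++ [:: b; d])
    + chi (X ++ [:: a; d]) * chi (X ++ [:: b; c]) = 0.

Definition facet_sided (R : numDomainType) (chi : seq T -> R) :=
  forall F v w, facet F -> v \notin F -> w \notin F ->
    0 < chi (F ++ [:: v]) * chi (F ++ [:: w]).

(* A fact (s, b) asserts 0 < (-1) ^+ b * chi s.  Facts are stored with s sorted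
   by lt (insertion sort, recording the parity of the transpositions used);
   soundness holds for any relation lt, which only has to be a strict total
   order for the lookups of a certificate to succeed. *)
Fixpoint insert_par (x : T) (s : seq T) : seq T * bool :=
  if s is y :: s' then
    if lt y x then let: (u, b) := insert_par x s' in (y :: u, ~~ b) else (x :: s, false)
  else ([:: x], false).

Fixpoint sort_par (s : seq T) : seq T * bool :=
  if s is x :: s' then
    let: (u, b) := sort_par s' in let: (v, c) := insert_par x u in (v, b (+) c)
  else ([::], false).

Definition normal (f : seq T * bool) : seq T * bool :=
  ((sort_par f.1).1, f.2 (+) (sort_par f.1).2).

Definition sign_in (facts : seq (seq T * bool)) (s : seq T) : option bool :=
  omap (addb (sort_par s).2) (ohead [seq f.2 | f <- facts & f.1 == (sort_par s).1]).

Inductive step :=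
  | Facet of seq T & T & T
  | Plucker of seq T & T & T & T & T.

(* [Facet F v w] transfers the sign of chi (F ++ [:: w]) to chi (F ++ [:: v]);
   [Plucker X a b c d] reads the sign of chi (X ++ [:: a; b]) off its
   Grassmann-Pluecker relation, whose last two products must have the same
   known sign. *)
Definition derive facts (st : step) : option (seq T * bool) :=
  match st with
  | Facet F v w =>
      if facet F && (v \notin F) && (w \notin F) then
        omap (pair (F ++ [:: v])) (sign_in facts (F ++ [:: w]))
      else None
  | Plucker X a b c d =>
      match sign_in facts (X ++ [:: c; d]), sign_in facts (X ++ [:: a; c]),
            sign_in facts (X ++ [:: b; d]), sign_in facts (X ++ [:: a; d]),
            sign_in facts (X ++ [:: b; c]) with
      | Some scd, Some sac, Some sbd, Some sad, Some sbc =>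
          if ~~ (sac (+) sbd) == sad (+) sbc then Some (X ++ [:: a; b], sad (+) sbc (+) ~~ scd)
          else None
      | _, _, _, _, _ => None
      end
  end.

Fixpoint refutes facts (steps : seq step) : bool :=
  if steps is st :: steps' then
    if derive facts st is Some f then
      (((normal f).1, ~~ (normal f).2) \in facts) || refutes (normal f :: facts) steps'
    else false
  else false.

Section Soundness.
Variables (R : realDomainType) (chi : seq T -> R).
Hypotheses (chi_alt : alternating chi) (chi_plucker : plucker_relations chi)
  (chi_facet : facet_sided chi).

Definition holds (f : seq T * bool) := 0 < (-1) ^+ f.2 * chi f.1.

Lemma chi_insert_par s x t :
  chi (s ++ x :: t) = (-1) ^+ (insert_par x t).2 * chi (s ++ (insert_par x t).1).
Proof.
elim: t s => [|y t IHt] s /=; first by rewrite mul1r.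
case: ifP => _; last by rewrite mul1r.
rewrite chi_alt -cat_rcons IHt; case: insert_par => u b /=.
by rewrite cat_rcons signrN mulNr.
Qed.

Lemma chi_sort_par s t :
  chi (s ++ t) = (-1) ^+ (sort_par t).2 * chi (s ++ (sort_par t).1).
Proof.
elim: t s => [|x t IHt] s /=; first by rewrite mul1r.
rewrite -cat_rcons IHt cat_rcons; case: sort_par => u b /=.
rewrite chi_insert_par; case: insert_par => v c /=.
by rewrite signr_addb mulrA.
Qed.

Lemma holds_normal f : holds (normal f) = holds f.
Proof. by rewrite /holds [chi f.1](chi_sort_par [::]) /= signr_addb -mulrA. Qed.

Lemma sign_inP facts s b : all holds facts -> sign_in facts s = Some b -> holds (s, b).
Proof.
move=> /allP ok; rewrite /sign_in.
case E: ohead => [b0|] //= [<-]; rewrite -holds_normal /normal /= addbC addbA addbb /=.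
have : b0 \in [seq f.2 | f <- facts & f.1 == (sort_par s).1].
  by move: E; case: [seq _ | _ <- _ & _] => //= _ ? [->]; rewrite mem_head.
by case/mapP => -[u b1] /=; rewrite mem_filter /= => /andP[/eqP-> /ok ?] ->.
Qed.

Lemma derive_sound facts st f : all holds facts -> derive facts st = Some f -> holds f.
Proof.
move=> ok; case: st => [F v w | X a b c d] /=.
  case: ifP => // /andP[/andP[fF vF] wF]; case E: sign_in => [sw|] //= [<-].
  rewrite /holds /= -(signed_mulr_gt0 (sign_inP ok E)) addbb.
  by rewrite expr0 mul1r chi_facet.
case Ecd: (sign_in _ (X ++ [:: c; d])) => [scd|] //.
case Eac: (sign_in _ (X ++ [:: a; c])) => [sac|] //.
case Ebd: (sign_in _ (X ++ [:: b; d])) => [sbd|] //.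
case Ead: (sign_in _ (X ++ [:: a; d])) => [sad|] //.
case Ebc: (sign_in _ (X ++ [:: b; c])) => [sbc|] //.
case: eqP => // same_sign [<-].
have q2 : 0 < (-1) ^+ (~~ (sad (+) sbc)) * (chi (X ++ [:: a; c]) * chi (X ++ [:: b; d])).
  by rewrite -same_sign negbK (signed_mulr_gt0 (sign_inP ok Ebd)); apply: sign_inP Eac.
have q3 : 0 < (-1) ^+ (sad (+) sbc) * (chi (X ++ [:: a; d]) * chi (X ++ [:: b; c])).
  by rewrite (signed_mulr_gt0 (sign_inP ok Ebc)); apply: sign_inP Ead.
rewrite /holds /= -(signed_mulr_gt0 (sign_inP ok Ecd)) -addbA addNb addbb addbT.
have -> : chi (X ++ [:: a; b]) * chi (X ++ [:: c; d]) =
    chi (X ++ [:: a; c]) * chi (X ++ [:: b; d]) - chi (X ++ [:: a; d]) * chi (X ++ [:: b; c]).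
  by apply/eqP; rewrite -subr_eq0; apply/eqP; rewrite -(chi_plucker X a b c d); ring.
by rewrite mulrBr [in X in _ - X]signrN mulNr opprK addr_gt0.
Qed.

Lemma refutes_sound facts steps : all holds facts -> ~~ refutes facts steps.
Proof.
elim: steps facts => [|st steps IHsteps] facts ok //=.
case E: derive => [f|] //; have := derive_sound ok E; rewrite -holds_normal => hf.
rewrite negb_or IHsteps /= ?hf ?ok ?andbT //; apply/negP => /(allP ok).
by rewrite /holds /= signrN mulNr oppr_gt0 ltNge (ltW hf).
Qed.

End Soundness.

Lemma refutes_chi_eq0 (R : realDomainType) (chi : seq T -> R) s steps :
  alternating chi -> plucker_relations chi -> facet_sided chi ->
  refutes [:: normal (s, false)] steps -> chi s = 0.
Proof.
move=> alt gp sided ref.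
have not_pos (chi' : seq T -> R) :
    alternating chi' -> plucker_relations chi' -> facet_sided chi' -> ~ 0 < chi' s.
  move=> alt' gp' sided' pos; apply/negP: ref; apply: (refutes_sound alt' gp' sided').
  by rewrite /= andbT (holds_normal alt') /holds /= mul1r.
case: (ltgtP (chi s) 0) => // [neg | pos]; last by case: (not_pos chi alt gp sided).
have altN : alternating (-%R \o chi) by move=> ? ? ? ?; rewrite /= alt.
have gpN : plucker_relations (-%R \o chi) by move=> ? ? ? ? ?; rewrite /= !mulrNN gp.
have sidedN : facet_sided (-%R \o chi) by move=> ? ? ? ? ? ?; rewrite /= mulrNN; apply: sided.
by case: (not_pos _ altN gpN sidedN); rewrite /= oppr_gt0.
Qed.

End SignCertificates.

Lemma in_Delta_sub (S S' : {set V}) : in_Delta S -> S' \subset S -> in_Delta S'.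
Proof. by case/hasP => F DF sSF sS'S; apply/hasP; exists F; last exact: subset_trans sSF. Qed.

(* Agrees with vtx on the vertices 1 <= |z| <= 6, but unlike vtx (whose inord
   goes through the opaque idP) it evaluates under vm_compute. *)
Definition vertex (z : int) : V := (Ordinal (ltn_pmod `|z|.-1 (isT : (0 < 6)%N)), z < 0).

Lemma vertex_vtx z : (0 < `|z| <= 6)%N -> vertex z = vtx z.
Proof.
by case/andP => z_gt0 z_le6; congr pair; apply: val_inj; rewrite /= inordK ?modn_small; lia.
Qed.

Definition facet_lists : seq (seq int) := base_facets ++ map (map (fun z => - z)) base_facets.

Lemma facets_DeltaE : facets_Delta = [seq [set:: map vertex F] | F <- facet_lists].
Proof.
have ranged : all (all (fun z => 0 < `|z| <= 6)%N) facet_lists by [].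
apply/eq_in_map => F /(allP ranged) /allP F_ranged /=.
suff -> : map vtx F = map vertex F by [].
by apply/eq_in_map => z /F_ranged /vertex_vtx.
Qed.

Definition Delta_facet (F : seq V) : bool :=
  [&& size F == 4, uniq F & has (fun G => all (mem (map vertex G)) F) facet_lists].

Lemma Delta_facet_in_Delta F : Delta_facet F -> in_Delta [set:: F].
Proof.
case/and3P => _ _ /hasP[G GD FG]; apply/hasP; exists [set:: map vertex G].
  by rewrite facets_DeltaE map_f.
by apply/subsetP => x; rewrite !inE => /(allP FG).
Qed.

Section Realization.
Variables (R : realType) (p : V -> 'rV[R]_4).

Definition hpt (v : V) : 'rV[R]_5 := row_mx (p v) 1.

Definition hval (g : 'cV[R]_5) (v : V) : R := (hpt v *m g) 0 0.

Definition supports (g : 'cV[R]_5) (S : {set V}) : Prop :=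
  forall v, hval g v <= 0 /\ (hval g v == 0) = (v \in S).

(* The junk value 0 off five-element lists makes the axioms of the sign
   certificates hold for all lists. *)
Definition chi (s : seq V) : R := if size s == 5 then detr (map hpt s) else 0.

Lemma is_face_supports S : is_face p S -> exists g, supports g S.
Proof.
case=> a [b ab_face]; exists (col_mx a^T (- b)%:M) => v.
have -> : hval (col_mx a^T (- b)%:M) v = dot4 a (p v) - b.
  rewrite /hval /hpt (mul_row_col (p v) 1 a^T) mul1mx !mxE /dot4; congr (_ + _).
  by apply: eq_bigr => i _; rewrite mxE mulrC.
by rewrite subr_le0 subr_eq0; case: (ab_face v).
Qed.

Lemma chi_alternating : alternating chi.
Proof.
move=> s a b t; rewrite /chi !size_cat /=; case: eqP => [sz | _]; last by rewrite oppr0.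
by rewrite !map_cat /= detr_swap // size_cat /= !size_map.
Qed.

Lemma chi_plucker_relations : plucker_relations chi.
Proof.
move=> X a b c d; have [szX | neX] := eqVneq (size X) 3.
  by rewrite /chi !size_cat szX /= !map_cat detr_plucker // size_map.
by rewrite /chi !size_cat /= addn2 !eqSS (negbTE neX) !mul0r subrr addr0.
Qed.

Hypothesis faces : forall S, S != setT -> in_Delta S -> is_face p S.

Lemma Delta_facet_neq0 F v : Delta_facet F -> v \notin F -> chi (F ++ [:: v]) != 0.
Proof.
move=> DF vF; have := Delta_facet_in_Delta DF.
case/and3P: DF => /eqP szF uniqF _ DF; set s := F ++ [:: v].
have szs : size s = 5 by rewrite size_cat szF.
have uniq_s : uniq s by rewrite cat_uniq uniqF /= orbF vF.
(* g j supports the face of F opposite to its j-th vertex (F itself for j = 4),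
   so the values of the g j at the vertices of s form a triangular matrix. *)
pose S (j : 'I_5) := [set x in F | x != nth v s j].
have /fin_all_exists [g gP] : forall j, exists g : 'cV[R]_5, supports g (S j).
  move=> j; apply/is_face_supports/faces.
    by apply: contraNneq vF => ST; have := in_setT v; rewrite -ST inE => /andP[].
  by apply: (in_Delta_sub DF); apply/subsetP => x; rewrite !inE => /andP[].
pose M := \matrix_(i < 5) nth 0 (map hpt s) i.
pose G := \matrix_(k < 5, j < 5) g j k 0.
have MG i j : (M *m G) i j = hval (g j) (nth v s i).
  by rewrite /hval !mxE; apply: eq_bigr => k _; rewrite /M /G !mxE (nth_map v) ?szs ?mxE.
have : \det (M *m G) != 0.
  rewrite det_trig; last first.
    apply/is_trig_mxP => i j lt_ij; rewrite MG; apply/eqP; rewrite (gP j _).2 inE.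
    have lt_i4 : (i < 4)%N by have := ltn_ord j; lia.
    by rewrite nth_uniq ?szs // (ltn_eqF lt_ij) andbT nth_cat szF lt_i4 mem_nth ?szF.
  by apply/prodf_neq0 => j _; rewrite MG (gP j _).2 inE eqxx andbF.
by rewrite det_mulmx mulf_eq0 negb_or /chi szs eqxx => /andP[].
Qed.

Lemma chi_facet_sided : facet_sided Delta_facet chi.
Proof.
move=> F v w DF vF wF; have chiv_neq0 := Delta_facet_neq0 DF vF.
have := Delta_facet_in_Delta DF; case/and3P: DF => /eqP szF _ _ DF.
have [g gP] : exists g, supports g [set:: F].
  apply/is_face_supports/faces => //.
  by apply: contraNneq vF => FT; have := in_setT v; rewrite -FT inE.
have g_lt0 x : x \notin F -> hval g x < 0.
  by move=> xF; rewrite lt_neqAle (gP x).1 (gP x).2 inE xF.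
have Fg x : x \in map hpt F -> x *m g = 0.
  case/mapP => f fF ->; apply/matrixP => i j; rewrite !ord1 [RHS]mxE; apply/eqP.
  by rewrite -/(hval g f) (gP f).2 inE.
have szhF : size (map hpt F) = 4 by rewrite size_map.
have := detr_last_proportional (hpt v) (hpt w) szhF Fg.
have chiE x : chi (F ++ [:: x]) = detr (map hpt F ++ [:: hpt x]).
  by rewrite /chi size_cat szF map_cat.
rewrite -!chiE -/(hval g v) -/(hval g w) => prop.
rewrite -(nmulr_rlt0 _ (g_lt0 v vF)) mulrCA -prop mulrCA nmulr_rlt0 ?g_lt0 //.
by rewrite -expr2 exprn_even_gt0.
Qed.

End Realization.

Definition vertex_order : rel V := [rel x y : V | (x.1 + 6 * x.2 < y.1 + 6 * y.2)%N].

Definition facet_step (F : seq int) (v w : int) : step V :=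
  Facet (map vertex F) (vertex v) (vertex w).

Definition plucker_step (X : seq int) (a b c d : int) : step V :=
  Plucker (map vertex X) (vertex a) (vertex b) (vertex c) (vertex d).

Definition Delta_certificate : seq (step V) :=
  [:: facet_step [:: -6; -5; -4; -3] (-1) (-2);
    facet_step [:: -6; -5; -4; -3] 1 (-2);
    facet_step [:: -6; -5; -4; -3] 2 (-2);
    facet_step [:: -6; -5; -4; -3] 3 (-2);
    facet_step [:: -6; -5; -4; -3] 4 (-2);
    facet_step [:: -6; -5; -4; -3] 5 (-2);
    facet_step [:: -6; -5; -4; -3] 6 (-2);
    facet_step [:: -6; -5; -3; -2] (-1) (-4);
    facet_step [:: -6; -5; -2; -1] (-4) (-3);
    facet_step [:: -6; -5; -4; 1] (-2) (-3);
    facet_step [:: -6; -5; -4; 1] (-1) (-3);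
    facet_step [:: -6; -4; -3; -2] (-1) (-5);
    facet_step [:: -6; -4; -2; -1] 3 (-3);
    facet_step [:: -6; -4; -1; 3] (-5) (-2);
    facet_step [:: -6; -5; -4; 1] 3 (-3);
    facet_step [:: -6; -5; -4; 1] 5 (-3);
    facet_step [:: -6; -5; -4; 1] 6 (-3);
    facet_step [:: -6; -5; -4; 1] 2 (-3);
    facet_step [:: -6; -5; 1; 2] 3 (-4);
    facet_step [:: -6; -5; 2; 3] (-4) 1;
    facet_step [:: -6; -5; -3; -2] 1 (-4);
    facet_step [:: -6; -5; -3; -2] 3 (-4);
    facet_step [:: -6; -5; -3; -2] 5 (-4);
    facet_step [:: -6; -5; -3; -2] 6 (-4);
    facet_step [:: -5; -3; -2; -1] 2 (-6);
    facet_step [:: -5; -3; -1; 2] (-6) (-2);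
    facet_step [:: -6; -5; 1; 2] (-3) (-4);
    facet_step [:: -5; -4; -3; 6] 1 (-6);
    facet_step [:: -5; -3; 1; 6] (-6) (-4);
    facet_step [:: -6; -5; 2; 3] (-3) 1;
    facet_step [:: -6; -5; -2; -1] 4 (-3);
    facet_step [:: -6; -5; -1; 4] 3 (-2);
    facet_step [:: -6; -5; 3; 4] (-3) (-1);
    facet_step [:: -6; -5; -2; -1] 1 (-3);
    facet_step [:: -6; -5; -2; -1] 3 (-3);
    facet_step [:: -6; -5; -2; -1] 5 (-3);
    facet_step [:: -6; -5; -2; -1] 6 (-3);
    facet_step [:: -6; -5; 1; 2] (-2) (-4);
    facet_step [:: -6; -5; 2; 3] (-2) 1;
    facet_step [:: -6; -5; 1; 2] (-1) (-4);
    facet_step [:: -6; -5; 2; 3] (-1) 1;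
    facet_step [:: -6; -4; -1; 3] 5 (-2);
    facet_step [:: -6; -1; 3; 5] (-5) (-4);
    facet_step [:: -6; -5; 2; 3] 5 1;
    facet_step [:: -6; -4; -2; -1] 1 (-3);
    facet_step [:: -6; -4; -2; -1] 6 (-3);
    facet_step [:: -6; -4; -3; -2] 5 (-5);
    facet_step [:: -4; -3; -2; 5] 1 (-6);
    facet_step [:: -4; -2; 1; 5] 3 (-3);
    facet_step [:: -4; -2; 1; 3] (-6) 5;
    facet_step [:: -4; -2; 1; 5] (-6) (-3);
    facet_step [:: -6; -4; -1; 3] 6 (-2);
    facet_step [:: -5; -4; 1; 6] 5 (-6);
    facet_step [:: -4; 1; 5; 6] (-6) (-5);
    facet_step [:: -5; -3; -2; -1] 4 (-6);
    facet_step [:: -3; -2; -1; 4] 6 (-5);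
    facet_step [:: -3; -2; 4; 6] (-6) (-1);
    facet_step [:: -4; -3; -2; 5] 6 (-6);
    facet_step [:: -3; -2; 5; 6] (-6) (-4);
    facet_step [:: -5; -3; 1; 6] 4 (-4);
    facet_step [:: -3; 1; 4; 6] (-6) (-5);
    facet_step [:: -6; -1; 3; 5] (-2) (-4);
    facet_step [:: -3; -2; 5; 6] (-1) (-4);
    facet_step [:: -2; -1; 5; 6] (-6) (-3);
    plucker_step [:: -6; -5; -4] (-2) 3 (-3) (-1);
    plucker_step [:: -6; -5; 3] (-4) 5 (-1) 2;
    plucker_step [:: -6; -5; 3] 1 5 (-4) 2;
    plucker_step [:: -6; -5; -4] (-2) 2 (-3) 3;
    plucker_step [:: -6; -5; -2] 1 3 (-4) 2;
    plucker_step [:: -6; -5; -4] (-1) 2 (-3) 3;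
    plucker_step [:: -6; -5; -1] 1 3 (-4) 2;
    plucker_step [:: -6; -5; 3] (-2) 5 (-1) 1;
    plucker_step [:: -6; -4; 1] 3 5 (-5) (-2);
    plucker_step [:: -6; -4; 1] 3 6 (-5) 5;
    plucker_step [:: -6; -4; 1] (-2) 6 (-5) 5;
    plucker_step [:: -6; -4; 1] (-1) 5 (-5) (-2);
    plucker_step [:: -6; -4; 1] (-1) 6 (-5) 5;
    plucker_step [:: -6; -4; 6] (-2) 3 (-1) 1;
    plucker_step [:: -6; -5; -3] 1 3 (-4) 2;
    plucker_step [:: -6; -5; 1] 3 6 (-4) (-3);
    plucker_step [:: -6; -5; -3] 3 6 (-4) 1;
    plucker_step [:: -6; -5; 3] (-2) 6 (-3) 1;
    plucker_step [:: -6; -5; -1] (-4) 5 (-2) 3;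
    plucker_step [:: -6; -5; -1] 1 5 (-4) 3;
    plucker_step [:: -6; -5; -3] (-1) 1 (-4) 2;
    plucker_step [:: -6; -5; -1] (-3) 5 (-2) 1;
    plucker_step [:: -6; -5; 5] (-4) (-2) (-3) (-1);
    plucker_step [:: -6; -4; -2] 3 5 (-5) 1;
    plucker_step [:: -6; -2; 3] 5 6 (-5) (-4);
    plucker_step [:: -6; -5; 1] (-2) 5 (-4) (-1);
    plucker_step [:: -6; -5; 1] (-2) 6 (-4) (-3);
    plucker_step [:: -6; -2; 1] 5 6 (-5) (-4);
    plucker_step [:: -6; -5; -3] 1 4 (-4) 3;
    plucker_step [:: -6; -5; -3] 4 6 (-4) 1;
    plucker_step [:: -6; -3; 6] (-2) 1 (-5) 4;
    plucker_step [:: -6; -2; 6] (-5) 5 (-3) 1;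
    plucker_step [:: -6; -2; -1] 3 6 (-5) 5;
    plucker_step [:: -6; -2; 6] (-5) (-1) 3 5].

Lemma Delta_certificate_refutes :
  refutes vertex_order Delta_facet
    [:: normal vertex_order (map vertex [:: -6; -5; -4; -3; -2], false)] Delta_certificate.
Proof. by vm_compute. Qed.

Theorem mainTheorem1 (R : realType) : ~ polytopal_Delta R.
Proof.
case=> p [_ _ _ faces].
have faces_Delta S : S != setT -> in_Delta S -> is_face p S by move=> /faces ->.
have facet0 : Delta_facet (map vertex [:: -6; -5; -4; -3]) by [].
have v0 : vertex (-2) \notin map vertex [:: -6; -5; -4; -3] by [].
have := Delta_facet_neq0 faces_Delta facet0 v0.
by rewrite (refutes_chi_eq0 (@chi_alternating _ p) (@chi_plucker_relations _ p)
  (chi_facet_sided faces_Delta) Delta_certificate_refutes) eqxx.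
Qed.
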